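(* Let $m>2$ be a positive integer and let $n,k$ be positive integers. Then: (1) For all $i\in\{0,1,\dots,n-1\}$ and $j\in\{0,1,\dots,k-1\}$, $|\mathrm{WHom}^{ij}(P_m,P_n\square P_k)|=|\mathrm{WHom}^{(n-i-1)j}(P_m,P_n\square P_k)|=|\mathrm{WHom}^{i(k-j-1)}(P_m,P_n\square P_k)|=|\mathrm{WHom}^{(n-i-1)(k-j-1)}(P_m,P_n\square P_k)|$. (2) $|\mathrm{WHom}(P_m,P_{2n}\square P_{2k})|=4\sum_{i=0}^{n-1}\sum_{j=0}^{k-1}|\mathrm{WHom}^{ij}(P_m,P_{2n}\square P_{2k})|$. (3) $|\mathrm{WHom}(P_m,P_{2n+1}\square P_{2k})|=4\sum_{i=0}^{n-1}\sum_{j=0}^{k-1}|\mathrm{WHom}^{ij}(P_m,P_{2n+1}\square P_{2k})|+2\sum_{j=0}^{k-1}|\mathrm{WHom}^{nj}(P_m,P_{2n+1}\square P_{2k})|$. (4) $|\mathrm{WHom}(P_m,P_{2n}\square P_{2k+1})|=4\sum_{i=0}^{n-1}\sum_{j=0}^{k-1}|\mathrm{WHom}^{ij}(P_m,P_{2n}\square P_{2k+1})|+2\sum_{i=0}^{n-1}|\mathrm{WHom}^{ik}(P_m,P_{2n}\square P_{2k+1})|$. (5) $|\mathrm{WHom}(P_m,P_{2n+1}\square P_{2k+1})|=4\sum_{i=0}^{n-1}\sum_{j=0}^{k-1}|\mathrm{WHom}^{ij}(P_m,P_{2n+1}\square P_{2k+1})|+2\sum_{j=0}^{k-1}|\mathrm{WHom}^{nj}(P_m,P_{2n+1}\square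 P_{2k+1})|+2\sum_{i=0}^{n-1}|\mathrm{WHom}^{ik}(P_m,P_{2n+1}\square P_{2k+1})|+|\mathrm{WHom}^{nk}(P_m,P_{2n+1}\square P_{2k+1})|$.
   Context: For a positive integer $n$, $P_n$ denotes the path with vertex set $\{0,1,\dots,n-1\}$ and edge set $\{\{i,i+1\} : i=0,\dots,n-2\}$. The Cartesian product $P_n\square P_k$ has vertex set $\{0,\dots,n-1\}\times\{0,\dots,k-1\}$, with $\{(a,u),(b,v)\}$ an edge iff either $a=b$ and $\{u,v\}\in E(P_k)$, or $\{a,b\}\in E(P_n)$ and $u=v$. A weak homomorphism from a graph $G$ to a graph $H$ is a map $f:V(G)\to V(H)$ such that for every edge $\{x,y\}\in E(G)$, either $f(x)=f(y)$ or $\{f(x),f(y)\}\in E(H)$. $\mathrm{WHom}(G,H)$ is the set of weak homomorphisms from $G$ to $H$, and $\mathrm{WHom}^{ij}(P_m,P_n\square P_k)$ is the set of those $f\in\mathrm{WHom}(P_m,P_n\square P_k)$ with $f(0)=(i,j)$. *)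

From mathcomp Require Import all_boot.
Set Implicit Arguments. Unset Strict Implicit. Unset Printing Implicit Defensive.

(* Graphs are represented by a (symmetric, irreflexive) edge relation on a finType. *)

Definition path_adj (n : nat) : rel 'I_n :=
  fun a b => (a.+1 == b :> nat) || (b.+1 == a :> nat).

Definition box_adj (T U : finType) (eG : rel T) (eH : rel U) : rel (T * U) :=
  fun x y => ((x.1 == y.1) && eH x.2 y.2) || (eG x.1 y.1 && (x.2 == y.2)).

Definition WHom (T U : finType) (eG : rel T) (eH : rel U) : {set {ffun T -> U}} :=
  [set f : {ffun T -> U} | [forall x, forall y, eG x y ==> ((f x == f y) || eH (f x) (f y))]].

Definition grid_adj (n k : nat) : rel ('I_n * 'I_k) := box_adj (@path_adj n) (@path_adj k).

Definition WHomPG (m n k : nat) : {set {ffun 'I_m -> 'I_n * 'I_k}} :=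
  WHom (@path_adj m) (@grid_adj n k).

(* WHom^{ij}(P_m, P_n □ P_k): those f with f(0) = (i,j); vertex 0 of P_m exists since m>0,
   for m = 0 the set is empty. i, j given as naturals. *)
Definition WHomij (m n k i j : nat) : {set {ffun 'I_m -> 'I_n * 'I_k}} :=
  [set f in WHomPG m n k | [exists x : 'I_m, (x == 0 :> nat) && (((f x).1 : nat) == i) && (((f x).2 : nat) == j)]].

From mathcomp Require Import all_boot zify.

Set Implicit Arguments.
Unset Strict Implicit.
Unset Printing Implicit Defensive.

(* The reflections (i, j) |-> (n-1-i, j) and (i, j) |-> (i, k-1-j) are
   automorphisms of the grid, so post-composing with them is a bijection
   WHom^{ij} -> WHom^{(n-1-i)j} (resp. WHom^{i(k-1-j)}).  Partitioning WHom by
   the value at 0 writes |WHom| as the sum of |WHom^{ij}| over the grid, and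
   folding this sum along both symmetry axes gives the four formulas; the
   middle row and column (present when a side is odd) are their own mirror
   images. *)

Lemma sum_nat_mirror (h : nat -> nat) N :
  (forall a, a < N -> h a = h (N - a - 1)) ->
  \sum_(0 <= a < N) h a = 2 * \sum_(0 <= a < N./2) h a + odd N * h N./2.
Proof.
move=> h_mirror; set n := N./2; set o := odd N.
have eN : N = n + o + n by have := odd_double_half N; rewrite -/n -/o; lia.
clearbody n o.
rewrite (big_cat_nat _ (n := n)) //=; last by lia.
rewrite (big_cat_nat _ (m := n) (n := n + o)) ?leq_addr //=; last by lia.
have -> : \sum_(n <= a < n + o) h a = o * h n.
  by case: o {eN}; rewrite ?addn1 ?big_nat1 ?mul1n ?addn0 ?big_geq ?mul0n.
have -> : \sum_(n + o <= a < N) h a = \sum_(0 <= a < n) h a.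
  rewrite -{1}(add0n (n + o)) big_addn [in RHS]big_nat_rev /=.
  have -> : N - (n + o) = n by lia.
  apply: eq_big_nat => a /andP[_ lt_an]; rewrite h_mirror; last by lia.
  congr h; lia.
lia.
Qed.

Lemma sum_nat_mirror2 (F : nat -> nat -> nat) N K :
  (forall i j, i < N -> j < K -> F i j = F (N - i - 1) j) ->
  (forall i j, i < N -> j < K -> F i j = F i (K - j - 1)) ->
  \sum_(0 <= i < N) \sum_(0 <= j < K) F i j =
    4 * \sum_(0 <= i < N./2) \sum_(0 <= j < K./2) F i j
    + 2 * odd N * \sum_(0 <= j < K./2) F N./2 j
    + 2 * odd K * \sum_(0 <= i < N./2) F i K./2
    + odd N * odd K * F N./2 K./2.
Proof.
move=> F_mirror1 F_mirror2.
rewrite (eq_big_nat _ _ (F2 := fun i =>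
           2 * \sum_(0 <= j < K./2) F i j + odd K * F i K./2)); last first.
  by move=> i /andP[_ lt_iN]; apply: sum_nat_mirror => j lt_jK; apply: F_mirror2.
rewrite big_split /= -!big_distrr /= sum_nat_mirror; last first.
  move=> i lt_iN; apply: eq_big_nat => j /andP[_ lt_jK].
  apply: F_mirror1 => //; lia.
have -> : odd K * \sum_(0 <= i < N) F i K./2 =
          odd K * (2 * \sum_(0 <= i < N./2) F i K./2 + odd N * F N./2 K./2).
  case: (boolP (odd K)) => [odd_K|]; last by rewrite !mul0n.
  by congr (_ * _); apply: sum_nat_mirror => i lt_iN; apply: F_mirror1 => //; lia.
lia.
Qed.

Section WeakHomomorphismsAt.
Variables (T U : finType) (eG : rel T) (eH : rel U) (x0 : T).

Definition WHom_at (p : U) : {set {ffun T -> U}} := [set f in WHom eG eH | f x0 == p].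

Lemma card_WHom_partition : #|WHom eG eH| = \sum_p #|WHom_at p|.
Proof.
rewrite -sum1_card (partition_big (fun f : {ffun T -> U} => f x0) xpredT) //=.
by apply: eq_bigr => p _; rewrite -sum1_card; apply: eq_bigl => f; rewrite !inE.
Qed.

Lemma WHom_postcomp (g : U -> U) (f : {ffun T -> U}) :
  {homo g : u v / eH u v} -> f \in WHom eG eH -> [ffun x => g (f x)] \in WHom eG eH.
Proof.
move=> g_adj; rewrite !inE => /forallP f_whom; apply/forallP => x; apply/forallP => y.
rewrite !ffunE; apply/implyP => xy.
case/orP: (implyP (forallP (f_whom x) y) xy) => [/eqP -> | fxy]; first by rewrite eqxx.
by rewrite g_adj ?orbT.
Qed.

Lemma card_WHom_at_involution (g : U -> U) (p : U) :
  involutive g -> {homo g : u v / eH u v} -> #|WHom_at p| = #|WHom_at (g p)|.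
Proof.
move=> g_inv g_adj.
pose gf (f : {ffun T -> U}) := [ffun x => g (f x)].
have gfK : involutive gf by move=> f; apply/ffunP => x; rewrite !ffunE g_inv.
have le_card q : #|WHom_at q| <= #|WHom_at (g q)|.
  rewrite -(card_imset _ (can_inj gfK)); apply/subset_leq_card/subsetP.
  move=> _ /imsetP[f /setIdP[f_whom /eqP f_x0] ->]; apply/setIdP.
  by split; [exact: WHom_postcomp | rewrite ffunE f_x0].
by apply/eqP; rewrite eqn_leq le_card -{2}(g_inv p) le_card.
Qed.

End WeakHomomorphismsAt.

Lemma path_adj_rev n : {homo @rev_ord n : a b / path_adj a b}.
Proof.
move=> a b; rewrite /path_adj /= => /orP[] /eqP ab; apply/orP; [right | left].
all: by apply/eqP; have := ltn_ord a; have := ltn_ord b; lia.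
Qed.

Lemma box_adj_map (T U : finType) (eG : rel T) (eH : rel U) (gT : T -> T) (gU : U -> U) :
  injective gT -> injective gU -> {homo gT : x y / eG x y} -> {homo gU : x y / eH x y} ->
  {homo (fun x : T * U => (gT x.1, gU x.2)) : x y / box_adj eG eH x y}.
Proof.
move=> gT_inj gU_inj gT_adj gU_adj x y; rewrite /box_adj /= (inj_eq gT_inj) (inj_eq gU_inj).
by case/orP=> /andP[e adj]; [rewrite e gU_adj | rewrite adj gT_adj ?orbT].
Qed.

Lemma WHomij_0 N K i j : WHomij 0 N K i j = set0.
Proof. by apply/setP => f; rewrite !inE; apply/andP => -[_ /existsP[[]]]. Qed.

Lemma WHomij_at m N K (i : 'I_N) (j : 'I_K) :
  WHomij m.+1 N K i j = WHom_at (@path_adj m.+1) (@grid_adj N K) ord0 (i, j).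
Proof.
apply/setP => f; rewrite !inE; congr (_ && _); apply/existsP/eqP => [[x] | f0].
  case/andP=> /andP[/eqP x0 /eqP fx1] /eqP fx2.
  have -> : ord0 = x by apply/val_inj.
  by case: (f x) fx1 fx2 => a b /= ai bj; congr pair; apply/val_inj.
by exists ord0; rewrite f0 /= !eqxx.
Qed.

Lemma card_WHomij_involution m N K (g : 'I_N * 'I_K -> 'I_N * 'I_K) (p : 'I_N * 'I_K) :
  involutive g -> {homo g : u v / grid_adj u v} ->
  #|WHomij m N K p.1 p.2| = #|WHomij m N K (g p).1 (g p).2|.
Proof.
move=> g_inv g_adj; case: m => [|m]; first by rewrite !WHomij_0.
by rewrite !WHomij_at -!surjective_pairing; apply: card_WHom_at_involution.
Qed.

Lemma card_WHomij_rev1 m N K i j : i < N -> j < K ->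
  #|WHomij m N K i j| = #|WHomij m N K (N - i - 1) j|.
Proof.
move=> lt_iN lt_jK; rewrite subn1 -subnS.
apply: (@card_WHomij_involution m N K (fun p => (rev_ord p.1, p.2))
          (Ordinal lt_iN, Ordinal lt_jK)).
  by case=> a b /=; rewrite rev_ordK.
by apply: (@box_adj_map _ _ _ _ (@rev_ord N) id);
  [exact: rev_ord_inj | exact: inj_id | exact: path_adj_rev | by []].
Qed.

Lemma card_WHomij_rev2 m N K i j : i < N -> j < K ->
  #|WHomij m N K i j| = #|WHomij m N K i (K - j - 1)|.
Proof.
move=> lt_iN lt_jK; rewrite subn1 -subnS.
apply: (@card_WHomij_involution m N K (fun p => (p.1, rev_ord p.2))
          (Ordinal lt_iN, Ordinal lt_jK)).
  by case=> a b /=; rewrite rev_ordK.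
by apply: (@box_adj_map _ _ _ _ id (@rev_ord K));
  [exact: inj_id | exact: rev_ord_inj | by [] | exact: path_adj_rev].
Qed.

(* For m = 0 the empty map lies in WHomPG 0 N K but in no WHomij 0 N K i j. *)
Lemma card_WHomPG_sum m N K : 0 < m ->
  #|WHomPG m N K| = \sum_(0 <= i < N) \sum_(0 <= j < K) #|WHomij m N K i j|.
Proof.
case: m => // m _; rewrite /WHomPG (card_WHom_partition _ _ ord0) big_mkord.
rewrite -(pair_big xpredT xpredT (fun i j => #|WHom_at _ _ _ (i, j)|)) /=.
by apply: eq_bigr => i _; rewrite big_mkord; apply: eq_bigr => j _; rewrite WHomij_at.
Qed.

Theorem lemma1 (m n k : nat) (hm : 2 < m) (hn : 0 < n) (hk : 0 < k) :
  (forall i j : nat, i < n -> j < k ->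
     #|WHomij m n k i j| = #|WHomij m n k (n - i - 1) j| /\
     #|WHomij m n k (n - i - 1) j| = #|WHomij m n k i (k - j - 1)| /\
     #|WHomij m n k i (k - j - 1)| = #|WHomij m n k (n - i - 1) (k - j - 1)|) /\
  #|WHomPG m (2 * n) (2 * k)| =
     4 * \sum_(0 <= i < n) \sum_(0 <= j < k) #|WHomij m (2 * n) (2 * k) i j| /\
  #|WHomPG m (2 * n + 1) (2 * k)| =
     4 * \sum_(0 <= i < n) \sum_(0 <= j < k) #|WHomij m (2 * n + 1) (2 * k) i j|
     + 2 * \sum_(0 <= j < k) #|WHomij m (2 * n + 1) (2 * k) n j| /\
  #|WHomPG m (2 * n) (2 * k + 1)| =
     4 * \sum_(0 <= i < n) \sum_(0 <= j < k) #|WHomij m (2 * n) (2 * k + 1) i j|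
     + 2 * \sum_(0 <= i < n) #|WHomij m (2 * n) (2 * k + 1) i k| /\
  #|WHomPG m (2 * n + 1) (2 * k + 1)| =
     4 * \sum_(0 <= i < n) \sum_(0 <= j < k) #|WHomij m (2 * n + 1) (2 * k + 1) i j|
     + 2 * \sum_(0 <= j < k) #|WHomij m (2 * n + 1) (2 * k + 1) n j|
     + 2 * \sum_(0 <= i < n) #|WHomij m (2 * n + 1) (2 * k + 1) i k|
     + #|WHomij m (2 * n + 1) (2 * k + 1) n k|.
Proof.
have card_grid N K : #|WHomPG m N K| =
    4 * \sum_(0 <= i < N./2) \sum_(0 <= j < K./2) #|WHomij m N K i j|
    + 2 * odd N * \sum_(0 <= j < K./2) #|WHomij m N K N./2 j|
    + 2 * odd K * \sum_(0 <= i < N./2) #|WHomij m N K i K./2|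
    + odd N * odd K * #|WHomij m N K N./2 K./2|.
  rewrite card_WHomPG_sum; last by lia.
  by apply: sum_nat_mirror2; [exact: card_WHomij_rev1 | exact: card_WHomij_rev2].
have halfE p : ((2 * p)./2 = p) * ((2 * p + 1)./2 = p) by split; lia.
have oddE p : (odd (2 * p) = false) * (odd (2 * p + 1) = true).
  by rewrite addn1 /= mul2n odd_double.
split.
  move=> i j lt_in lt_jk; have lt_j'k : k - j - 1 < k by lia.
  by rewrite -card_WHomij_rev1 // -card_WHomij_rev2 // -card_WHomij_rev1 // -card_WHomij_rev2.
by rewrite !card_grid !halfE !oddE /=; lia.
Qed.
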